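(* Let $\Gamma$ be a 3-colex and $c\in\{r,b,g,y\}$. If $\overline S$ is an $X$-type stabilizer of the color code on $\Gamma$, then $\pi_c(\overline S)$ is an $X$-stabilizer of the 3D toric code on $\Gamma^{*\setminus c}$. Conversely, for every $X$-stabilizer $S$ of the toric code on $\Gamma^{*\setminus c}$ there exists an $X$-stabilizer $\overline S$ of the color code such that $\pi_c(\overline S)=S$ and $\pi_{c'}(\overline S)=I$ for every color $c'\neq c$.
   Context: Colors are $\{r,b,g,y\}$. A 3-colex $\Gamma$ is a 3-dimensional cell complex without boundary in which every vertex is 4-valent and lies in exactly four 3-cells, and whose 3-cells are properly 4-colored: every face lies in exactly two 3-cells, which have different colors. The dual complex $\Gamma^*$ has an $i$-cell for every $(3-i)$-cell of $\Gamma$, with incidences reversed; every 3-cell of $\Gamma^*$ is a tetrahedron. A vertex of $\Gamma^*$ is given the color of the corresponding 3-cell of $\Gamma$, so the four vertices of each tetrahedron have distinct colors. A face of $\Gamma^*$ is an $x$-face if none of its vertices has color $x$; each tetrahedron $\nu$ has a unique $x$-face $\pi_x(\nu)$. The 3D color code on $\Gamma$ has one qubit per tetrahedron of $\Gamma^*$ and $X$-stabilizer generators $B^X_v=\prod_{\nu\ni v}X_\nu$ for vertices $v$ of $\Gamma^*$; its $X$-stabilizers are the products of these. For a color $x$, the minor complex $\Gamma^{*\setminus x}$ is obtained from $\Gamma^*$ by deleting all vertices of color $x$ together with all edges and faces incident to them; its faces are the $x$-faces of $\Gamma^*$ and its 3-cells are obtained by merging, for each $x$-vertex, the tetrahedra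 containing it. The 3D toric code on $\Gamma^{*\setminus x}$ has qubits on faces and $X$-stabilizer generators $\prod_{f\in\partial\mu}X_f$ for 3-cells $\mu$; its $X$-stabilizers are products of these. Operators are mapped by $\pi_x(\prod_{\nu\in\Omega}X_\nu)=\prod_{\nu\in\Omega}X_{\pi_x(\nu)}$ (with $X_f^2=I$). *)

From HB Require Import structures.
From mathcomp Require Import all_boot.
Set Implicit Arguments. Unset Strict Implicit. Unset Printing Implicit Defensive.

Inductive color := r | b | g | y.
Definition color_code (c : color) : 'I_4 :=
  match c with r => inord 0 | b => inord 1 | g => inord 2 | y => inord 3 end.
Definition color_decode (i : 'I_4) : color :=
  match val i with 0 => r | 1 => b | 2 => g | _ => y end.
Lemma color_codeK : cancel color_code color_decode.
Proof. by case; rewrite /color_decode /= inordK. Qed.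
HB.instance Definition _ := Finite.copy color (can_type color_codeK).

(* A 3-colex Gamma, presented through the incidence structure of its dual
   complex Gamma^* : vertices (= 3-cells of Gamma, coloured), faces
   (= edges of Gamma), tetrahedra (= vertices of Gamma, the qubits).
   - tv t x   : the vertex of colour x of the tetrahedron t
   - tf t x   : the x-face pi_x(t) of t (the face opposite tv t x)
   - fcol f   : the colour x such that f is an x-face
   - fv f z   : the vertex of colour z of the face f (z <> fcol f)
   Axioms: vertices of a tetrahedron have the prescribed (distinct) colours,
   the x-face of t is an x-face whose vertices are those of t of colour <> x,
   and (Gamma has no boundary / every edge of Gamma has two endpoints)
   every face of Gamma^* lies in exactly two tetrahedra. *)
Record colex3 := Colex3 {
  vert : finType;
  face : finType;
  tet : finType;
  vcol : vert -> color;
  tv : tet -> color -> vert;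
  tf : tet -> color -> face;
  fcol : face -> color;
  fv : face -> color -> vert;
  tv_col : forall t x, vcol (tv t x) = x;
  tf_col : forall t x, fcol (tf t x) = x;
  tf_fv : forall t x z, z != x -> fv (tf t x) z = tv t z;
  face_in_two : forall f : face, #|[set t : tet | [exists x, tf t x == f]]| = 2
}.

Section Codes.
Variable G : colex3.

(* X-type Pauli operators on a qubit set Q are identified with their support
   {set Q}; a product of operators is the mod-2 sum of supports. *)

Definition ccB (v : vert G) : {set tet G} := [set t | [exists x, tv t x == v]].

Definition cc_Xstab (S : {set tet G}) : Prop :=
  exists W : {set vert G},
    S = [set t | \big[addb/false]_(v in W) (t \in ccB v)].

(* pi_x (prod_{nu in Om} X_nu) = prod_{nu in Om} X_{pi_x(nu)}, with X_f^2 = I. *)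
Definition proj (x : color) (Om : {set tet G}) : {set face G} :=
  [set f | \big[addb/false]_(t in Om) (tf t x == f)].

(* Toric code on the minor Gamma^{*\x}: the 3-cell obtained by merging the
   tetrahedra around the x-vertex v has boundary prod_{nu ∋ v} X_{pi_x(nu)}. *)
Definition tcB (x : color) (v : vert G) : {set face G} :=
  [set f | \big[addb/false]_(t in ccB v) (tf t x == f)].

Definition tc_Xstab (x : color) (S : {set face G}) : Prop :=
  exists W : {set vert G}, (forall v, v \in W -> vcol v = x) /\
    S = [set f | \big[addb/false]_(v in W) (f \in tcB x v)].

End Codes.

From mathcomp Require Import all_boot.

Set Implicit Arguments.
Unset Strict Implicit.
Unset Printing Implicit Defensive.

(* An X-type operator is its support, so a product of operators is the
   mod-2 sum [xorsum] of their supports, and [proj x] is the mod-2 sum of the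
   singletons [{tf t x}].  The projection is therefore linear, and it sends
   [B^X_v] to the toric generator [tcB x v] when [v] has colour [x] and to the
   identity otherwise: every face of the star of [v] that avoids [v]'s colour
   contains [v], and the two tetrahedra sharing it both contain [v], so each
   such face occurs twice.  Sorting the generators of a colour-code stabilizer
   by colour gives both directions. *)

Section XorSum.

Variables I T : finType.

Definition xorsum (W : {set I}) (A : I -> {set T}) : {set T} :=
  [set t | \big[addb/false]_(i in W) (t \in A i)].

Lemma big_addb_odd (W : {set I}) (P : pred I) :
  \big[addb/false]_(i in W) P i = odd #|[set i in W | P i]|.
Proof.
rewrite -sum1dep_card (big_morph odd oddD (erefl (odd 0))) /=.
rewrite big_mkcond [RHS]big_mkcond /=.
by apply: eq_bigr => i _; case: (i \in W); case: (P i).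
Qed.

Lemma xorsum_eq0 (W : {set I}) (A : I -> {set T}) :
  (forall i, i \in W -> A i = set0) -> xorsum W A = set0.
Proof.
move=> A0; apply/setP => t; rewrite !inE.
by rewrite big1 // => i /A0 ->; rewrite inE.
Qed.

Lemma xorsum_restrict (W : {set I}) (P : pred I) (A : I -> {set T}) :
  (forall i, i \in W -> ~~ P i -> A i = set0) ->
  xorsum W A = xorsum [set i in W | P i] A.
Proof.
move=> A0; apply/setP => t; rewrite !inE (bigID P) /=.
rewrite [X in _ (+) X]big1 ?addbF => [|i /andP[/A0 Ai0 /Ai0 ->]]; last by rewrite inE.
by apply: eq_bigl => i; rewrite inE.
Qed.

End XorSum.

Lemma xorsum_xorsum (I J T : finType) (W : {set I}) (A : I -> {set J})
    (B : J -> {set T}) :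
  xorsum (xorsum W A) B = xorsum W (fun i => xorsum (A i) B).
Proof.
apply/setP => t; rewrite !inE.
under [RHS]eq_bigr => i _ do rewrite inE.
rewrite (exchange_big_dep xpredT) //= big_mkcond /=.
apply: eq_bigr => j _; rewrite inE [RHS]big_mkcondr /=.
rewrite -[LHS]/((\big[addb/false]_(i in W) (j \in A i)) && (t \in B j)).
rewrite (big_morph (andb^~ _) (fun a b => andb_addl a b _) (erefl (false && _))).
by apply: eq_bigr => i _; case: (j \in A i).
Qed.

Section Projection.

Variable G : colex3.
Implicit Types (t : tet G) (v : vert G) (x z : color).

Lemma projE x (Om : {set tet G}) : proj x Om = xorsum Om (fun t => [set tf t x]).
Proof.
by apply/setP => f; rewrite !inE; apply: eq_bigr => t _; rewrite inE eq_sym.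
Qed.

Lemma tf_col_inj t t' x x' : tf t x = tf t' x' -> x = x'.
Proof. by move=> eq_tf; rewrite -(tf_col t x) eq_tf tf_col. Qed.

Lemma tv_eq_tf t t' x z : z != x -> tf t x = tf t' x -> tv t z = tv t' z.
Proof. by move=> zx eq_tf; rewrite -(tf_fv t zx) -(tf_fv t' zx) eq_tf. Qed.

Lemma proj_ccB_eq0 x v : vcol v != x -> proj x (ccB v) = set0.
Proof.
move=> vx; apply/setP => f; rewrite !inE big_addb_odd.
set E := [set t in ccB v | tf t x == f].
have [-> | [t0 Et0]] := set_0Vmem E; first by rewrite cards0.
suff -> : E = [set t | [exists x', tf t x' == f]] by rewrite face_in_two.
move: Et0; rewrite inE => /andP[]; rewrite inE => /existsP[z /eqP t0v] /eqP t0f.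
have vz : vcol v = z by rewrite -t0v tv_col.
apply/setP => t; rewrite !inE; apply/andP/existsP => [[_ tf_f] | [x' /eqP tf_f]].
  by exists x.
have x'x : x' = x by apply: tf_col_inj (etrans tf_f (esym t0f)).
subst x'; split; last by rewrite tf_f.
apply/existsP; exists z; rewrite -t0v -vz.
by rewrite (tv_eq_tf vx (etrans tf_f (esym t0f))).
Qed.

Lemma proj_xorsum_ccB x (W : {set vert G}) :
  proj x (xorsum W (@ccB G)) = xorsum W (tcB x).
Proof.
rewrite projE xorsum_xorsum; apply/setP => f; rewrite !inE.
by apply: eq_bigr => v _; rewrite /tcB -projE.
Qed.

End Projection.

Theorem corollary3 (G : colex3) (c : color) :
  (forall Sb : {set tet G}, cc_Xstab Sb -> tc_Xstab c (proj c Sb)) /\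
  (forall S : {set face G}, tc_Xstab c S ->
     exists Sb : {set tet G}, cc_Xstab Sb /\ proj c Sb = S /\
       (forall c' : color, c' != c -> proj c' Sb = set0)).
Proof.
split=> [_ [W ->] | _ [W [Wc ->]]].
  exists [set v in W | vcol v == c]; split.
    by move=> v; rewrite inE => /andP[_ /eqP].
  rewrite (proj_xorsum_ccB c W) (xorsum_restrict (P := fun v => vcol v == c)) //.
  by move=> v _; apply: proj_ccB_eq0.
exists (xorsum W (@ccB G)); split; first by exists W.
split=> [|c' c'c]; first exact: proj_xorsum_ccB.
rewrite proj_xorsum_ccB xorsum_eq0 // => v /Wc vc.
by apply: proj_ccB_eq0; rewrite vc eq_sym.
Qed.
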